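(* The two-player Tower of Hanoi game under normal play on $l\ge 4$ pegs with $n\ge 3$ disks is a draw (neither player can force a win), for each of the ending conditions (EC1)–(EC5).
   Context: Tower of Hanoi on $l$ pegs (labeled $1,\dots,l$) with $n$ disks of pairwise distinct sizes: a position assigns each disk to a peg, disks on each peg stacked with sizes decreasing from bottom to top. A legal move transfers the top disk of one peg to a different peg that is empty or has a larger top disk. A tower position is one with all disks on one peg. Two-player game: Anh (first player) and Bao (second player) alternate moves starting from the position with all disks on Peg 1; a player may not move the disk that the opponent moved in the immediately preceding move. The game ends when the tower has been transferred to a final peg, according to one fixed ending condition: (EC1) all disks on a given peg distinct from Peg 1; (EC2) all disks on Peg 1, the largest disk having been moved at least once; (EC3) all disks on Peg 1, the smallest disk having been moved at least once; (EC4) all disks on any peg, the largest disk having been moved at least once; (EC5) all disks on any peg, the smallest disk having been moved at least once. A move creating a tower position that does not end the game (tower on a non-final peg) is not allowed. Normal play: the player who makes the last (game-ending) move wins; if neither player can force a win, the game is a draw. *)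

From mathcomp Require Import all_boot.
Set Implicit Arguments. Unset Strict Implicit. Unset Printing Implicit Defensive.

(* Pegs are the naturals 0 .. l-1; Peg 1 of the paper is peg 0 here.
   Disks are 'I_n; disk i has size i (0 = smallest, n-1 = largest).
   A position maps each disk to its peg; stacking order is forced by sizes. *)
Definition position (n : nat) := 'I_n -> nat.

Record state (n : nat) := State {
  pos : position n;
  last_moved : option 'I_n;
  largest_moved : bool;
  smallest_moved : bool }.

Definition tower n (p : position n) : Prop := exists q, forall d, p d = q.

Inductive ending := EC1 of nat | EC2 | EC3 | EC4 | EC5.

Definition valid_ending (l : nat) (e : ending) : Prop :=
  match e with EC1 f => 0 < f < l | _ => True end.

Definition game_over n (e : ending) (p : position n) (big small : bool) : Prop :=
  match e with
  | EC1 f => forall d, p d = f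
  | EC2 => (forall d, p d = 0) /\ big
  | EC3 => (forall d, p d = 0) /\ small
  | EC4 => tower p /\ big
  | EC5 => tower p /\ small
  end.

Definition move_pos n (p : position n) (d : 'I_n) (q : nat) : position n :=
  fun x => if x == d then q else p x.

Definition next_state n (s : state n) (d : 'I_n) (q : nat) : state n :=
  State (move_pos (pos s) d q) (Some d)
        (largest_moved s || (val d == n.-1))
        (smallest_moved s || (val d == 0)).

Definition ends n (e : ending) (s : state n) (d : 'I_n) (q : nat) : Prop :=
  let s' := next_state s d q in
  game_over e (pos s') (largest_moved s') (smallest_moved s').

Definition legal l n (e : ending) (s : state n) (d : 'I_n) (q : nat) : Prop :=
  q < l /\
  last_moved s <> Some d /\                                  (* no-undo rule *)
  (forall d', pos s d' = pos s d -> d <= d') /\              (* d is on top *)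
  q <> pos s d /\
  (forall d', pos s d' = q -> d < d') /\                     (* target empty or larger top *)
  (ends e s d q \/ ~ tower (move_pos (pos s) d q)).         (* no non-final tower *)

Inductive mover_wins l n (e : ending) : state n -> Prop :=
| MW s d q : legal l e s d q ->
             (ends e s d q \/ mover_loses l e (next_state s d q)) ->
             mover_wins l e s
with mover_loses l n (e : ending) : state n -> Prop :=
| ML s : (forall d q, legal l e s d q ->
             ~ ends e s d q /\ mover_wins l e (next_state s d q)) ->
         mover_loses l e s.

Definition init_state (n : nat) : state n := State (fun _ => 0) None false false.

Definition is_draw (l n : nat) (e : ending) : Prop :=
  ~ mover_wins l e (init_state n) /\ ~ mover_loses l e (init_state n).

From mathcomp Require Import all_boot.
From mathcomp Require Import zify.

Set Implicit Arguments. Unset Strict Implicit. Unset Printing Implicit Defensive.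

(* A tower can only be completed by a
   move of the smallest disk d0 (any other disk would have to land on d0), and
   d0 cannot complete one when it was just moved, when it shares a peg with
   d1, or when d1 and d2 lie on different pegs: call such a state blocked.
   Unless d0 was just moved onto d1 and d2, the player to move can reach a
   blocked state with a non-ending move, moving d0, d1 or d2 to a peg free of
   all three (there are four pegs). Conversely every legal move from a blocked
   state is non-ending and avoids that exceptional situation. The initial
   state is both blocked and not exceptional, so neither player can force a
   win, whatever the ending condition. *)

Section NoForcedWin.
Variables (l n : nat) (e : ending) (P Q : state n -> Prop).
Hypothesis P_move :
  forall s, P s -> exists d q, legal l e s d q /\ Q (next_state s d q).
Hypothesis Q_move : forall s, Q s -> forall d q, legal l e s d q ->
  ~ ends e s d q /\ P (next_state s d q).

Fixpoint mover_wins_notQ s (w : mover_wins l e s) {struct w} : ~ Q s :=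
  match w in mover_wins _ _ s0 return ~ Q s0 with
  | MW _ _ _ legal_dq next => fun Qs =>
      match Q_move Qs legal_dq with
      | conj not_end Pnext =>
        match next with
        | or_introl end_dq => not_end end_dq
        | or_intror lose => mover_loses_notP lose Pnext
        end
      end
  end
with mover_loses_notP s (w : mover_loses l e s) {struct w} : ~ P s :=
  match w in mover_loses _ _ s0 return ~ P s0 with
  | ML _ all_moves => fun Ps =>
      match P_move Ps with
      | ex_intro _ (ex_intro _ (conj legal_dq Qnext)) =>
        match all_moves _ _ legal_dq with
        | conj _ win => mover_wins_notQ win Qnext
        end
      end
  end.

Lemma is_draw_of_invariants :
  P (init_state n) -> Q (init_state n) -> is_draw l n e.
Proof.
by move=> Pinit Qinit; split=> [/mover_wins_notQ|/mover_loses_notP]; apply.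
Qed.

End NoForcedWin.

Lemma move_pos_moved n (p : position n) d q : move_pos p d q d = q.
Proof. by rewrite /move_pos eqxx. Qed.

Lemma move_pos_other n (p : position n) d q x :
  x != d -> move_pos p d q x = p x.
Proof. by rewrite /move_pos => /negPf ->. Qed.

Lemma not_tower n (p : position n) x y : p x <> p y -> ~ tower p.
Proof. by move=> neq [r on_r]; apply: neq; rewrite !on_r. Qed.

Lemma ends_tower n e (s : state n) d q :
  ends e s d q -> tower (move_pos (pos s) d q).
Proof.
rewrite /ends /game_over /=.
by case: e => [f on_f | [on_0 _] | [on_0 _] | [tw _] | [tw _]] //; eexists.
Qed.

Lemma tower_move_smallest n (p : position n) d q :
  tower (move_pos p d q) -> (forall d', p d' = q -> d < d') ->
  forall d' : 'I_n, d <= d'.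
Proof.
move=> [r on_r] free d'; have [-> // | ne] := eqVneq d' d.
have r_q : r = q by rewrite -(on_r d) move_pos_moved.
by apply/ltnW/free; rewrite -r_q -(on_r d') move_pos_other.
Qed.

Lemma avoid3 (a b c : nat) : exists r, r < 4 /\ a <> r /\ b <> r /\ c <> r.
Proof.
case: (boolP [|| a == 0, b == 0 | c == 0]) => H0; last by exists 0; lia.
case: (boolP [|| a == 1, b == 1 | c == 1]) => H1; last by exists 1; lia.
case: (boolP [|| a == 2, b == 2 | c == 2]) => H2; last by exists 2; lia.
by exists 3; lia.
Qed.

Section ThreeSmallestDisks.
Variables (l k : nat) (e : ending).
Hypothesis l4 : 3 < l.
Local Notation n := k.+3.
Let d0 : 'I_n := ord0.
Let d1 : 'I_n := Ordinal (isT : 1 < n).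
Let d2 : 'I_n := Ordinal (isT : 2 < n).

Lemma lt_d1 (d : 'I_n) : d < d1 -> d = d0.
Proof. by case: d => -[|m] // lt_m _; apply: val_inj. Qed.

Lemma lt_d2 (d : 'I_n) : d < d2 -> d = d0 \/ d = d1.
Proof. by case: d => -[|[|m]] // lt_m _; [left | right]; apply: val_inj. Qed.

Lemma lt3_disk (d : 'I_n) : d < 3 -> [\/ d = d0, d = d1 | d = d2].
Proof.
by case: d => -[|[|[|m]]] // lt_m _;
  [constructor 1 | constructor 2 | constructor 3]; apply: val_inj.
Qed.

Lemma fresh_peg (s : state n) :
  exists2 r, r < l & forall d : 'I_n, d < 3 -> pos s d <> r.
Proof.
have [r [r4 [r0 [r1 r2]]]] := avoid3 (pos s d0) (pos s d1) (pos s d2).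
by exists r => [|d /lt3_disk [->|->|->]] //; apply: leq_trans l4.
Qed.

Lemma fresh_move_legal (s : state n) (d : 'I_n) r :
  d < 3 -> r < l -> last_moved s <> Some d ->
  (forall d' : 'I_n, d' < d -> pos s d' <> pos s d) ->
  (forall d' : 'I_n, d' < 3 -> pos s d' <> r) ->
  legal l e s d r.
Proof.
move=> d3 rl not_last on_top fresh.
have [w w3 w_d] : exists2 w : 'I_n, w < 3 & w != d.
  by have [->|ne] := eqVneq d d0; [exists d1 | exists d0; rewrite // eq_sym].
repeat split => //.
- by move=> d' same; rewrite leqNgt; apply/negP => /on_top.
- by move/esym; apply: fresh.
- move=> d' on_r; rewrite ltnNge; apply/negP => le_d.
  exact: fresh d' (leq_ltn_trans le_d d3) on_r.
- right; apply: (@not_tower _ _ w d).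
  by rewrite move_pos_moved move_pos_other //; apply: fresh.
Qed.

Definition evasive (s : state n) : Prop :=
  last_moved s <> Some d0 \/ pos s d0 <> pos s d1 \/ pos s d1 <> pos s d2.

Definition tower_blocked (s : state n) : Prop :=
  last_moved s = Some d0 \/ pos s d0 = pos s d1 \/ pos s d1 <> pos s d2.

Lemma evasive_move s : evasive s ->
  exists d q, legal l e s d q /\ tower_blocked (next_state s d q).
Proof.
move=> ev; have [r rl fresh] := fresh_peg s.
have [last0 | not_last0] := eqVneq (last_moved s) (Some d0); last first.
  exists d0, r; split; last by left.
  by apply: fresh_move_legal => //; apply/eqP.
have [eq01 | /eqP ne01] := eqVneq (pos s d0) (pos s d1).
  have ne12 : pos s d1 <> pos s d2 by case: ev => [|[]].
  exists d2, r; split.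
    apply: fresh_move_legal => //; first by rewrite last0.
    by move=> d' /lt_d2 [->|->]; rewrite ?eq01.
  by right; right; rewrite /= move_pos_moved move_pos_other //; apply: fresh.
exists d1, r; split.
  by apply: fresh_move_legal => //; [rewrite last0 | move=> d' /lt_d1 ->].
right; right; rewrite /= move_pos_moved move_pos_other //.
by move/esym; apply: fresh.
Qed.

Lemma tower_blocked_step s : tower_blocked s -> forall d q, legal l e s d q ->
  ~ ends e s d q /\ evasive (next_state s d q).
Proof.
move=> blocked d q [_ [not_last [_ [moved [free _]]]]]; split.
  move=> /ends_tower tw.
  have d_0 : d = d0.
    by apply: val_inj; have := tower_move_smallest tw free d0; rewrite leqn0 => /eqP.
  subst d; case: blocked => [// | [eq01 | ne12]].
    apply: (not_tower (x := d0) (y := d1)) tw.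
    by rewrite move_pos_moved move_pos_other // -eq01.
  by apply: (not_tower (x := d1) (y := d2)) tw; rewrite !move_pos_other.
have [d_0 | ne] := eqVneq d d0; last by left => -[/eqP]; apply/negP.
subst d; case: blocked => [// | [eq01 | ne12]]; right.
  by left; rewrite /= move_pos_moved move_pos_other // -eq01.
by right; rewrite /= !move_pos_other.
Qed.

End ThreeSmallestDisks.

Theorem theorem2 (l n : nat) (e : ending) :
  4 <= l -> 3 <= n -> valid_ending l e -> is_draw l n e.
Proof.
move=> l4; case: n => [|[|[|k]]] // _ _.
apply: (is_draw_of_invariants (evasive_move e l4) (@tower_blocked_step l k e)).
- by left.
- by right; left.
Qed.
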